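(* Let $G$ be a non-complete double-critical $k$-chromatic graph and $x\in V(G)$. Then $\alpha_x\ge 2$, and $$\deg_G(x)-\alpha_x\ \ge\ |B(xy)|+1\ \ge\ k-1,$$ where $y\in N(x)$ is any vertex contained in an independent set of $G_x$ of size $\alpha_x$.
   Context: All graphs are finite and simple. A graph $G$ is (vertex-)critical if $\chi(G-v)<\chi(G)$ for every vertex $v\in V(G)$. A critical graph $G$ is double-critical if $\chi(G-x-y)\le\chi(G)-2$ for every edge $xy\in E(G)$. For a vertex $x$, $G_x:=G[N(x)]$ is the subgraph induced by the neighbourhood of $x$ and $\alpha_x:=\alpha(G_x)$ its independence number. For an edge $xy$, $B(xy):=N(x)\cap N(y)$ is the common neighbourhood of $x$ and $y$. *)

From mathcomp Require Import all_boot.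
Set Implicit Arguments. Unset Strict Implicit. Unset Printing Implicit Defensive.

Section Graph.
Variables (T : finType) (e : rel T).

Definition simple_graph : Prop := symmetric e /\ irreflexive e.

Definition colorableb (S : {set T}) (k : nat) : bool :=
  [exists f : {ffun T -> 'I_k},
     [forall x in S, forall y in S, e x y ==> (f x != f y)]].

(* chromatic number of G[S]; #|T| colours always suffice, so this is the
   least k with a proper k-colouring of G[S] *)
Definition chi (S : {set T}) : nat :=
  \big[minn/#|T|]_(k < #|T|.+1 | colorableb S k) (k : nat).

Definition chiG : nat := chi [set: T].

Definition critical : Prop :=
  forall v : T, chi ([set: T] :\ v) < chiG.

Definition double_critical : Prop :=
  critical /\ forall x y : T, e x y -> chi ([set: T] :\ x :\ y) <= chiG - 2.

Definition complete : Prop := forall x y : T, x != y -> e x y.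

Definition nbhd (x : T) : {set T} := [set y | e x y].

Definition independent (I : {set T}) : bool :=
  [forall x in I, forall y in I, ~~ e x y].

Definition alpha_at (x : T) : nat :=
  \max_(I : {set T} | (I \subset nbhd x) && independent I) #|I|.

Definition common_nbhd (x y : T) : {set T} := nbhd x :&: nbhd y.

End Graph.

From mathcomp Require Import all_boot zify.
Set Implicit Arguments. Unset Strict Implicit. Unset Printing Implicit Defensive.

(* Fix an optimal colouring of G - x - y for an edge xy; it uses at most
   chi(G) - 2 colours.  Every colour class c meets B(xy): otherwise colour x
   with c, give y a fresh colour and move the c-coloured neighbours of x to
   that fresh colour, which properly colours G with chi(G) - 1 colours.
   Hence |B(xy)| >= chi(G) - 2.  Applied to the edge xz and the colour of a
   non-neighbour y of z inside N(x), the same fact yields a common neighbour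
   w of x and z that is not adjacent to y; so w, a maximum independent set
   of G_x containing y and z, and B(xy) are disjoint parts of N(x).
   Finally alpha_x >= 2, since otherwise x together with N(x) is a clique of
   size deg x + 1 >= chi(G) avoiding some vertex v, whereas chi(G - v) < chi(G). *)

Lemma bigmin_leq (I : finType) (P : pred I) (F : I -> nat) d i :
  P i -> \big[minn/d]_(j | P j) F j <= F i.
Proof.
move=> Pi; rewrite -big_filter.
have : i \in [seq j <- index_enum I | P j] by rewrite mem_filter Pi mem_index_enum.
elim: (filter _ _) => //= a s IH; rewrite in_cons big_cons => /predU1P[<-|/IH].
  exact: geq_minl.
exact: leq_trans (geq_minr _ _).
Qed.

Section Colouring.
Variables (T : finType) (e : rel T).
Hypothesis esym : symmetric e.
Hypothesis eirr : irreflexive e.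

Definition proper_colouring (S : {set T}) (m : nat) (g : T -> nat) : Prop :=
  {in S, forall v, g v < m} /\ {in S &, forall u v, e u v -> g u != g v}.

Lemma colorable_card S : colorableb e S #|T|.
Proof.
apply/existsP; exists [ffun v => enum_rank v].
apply/'forall_implyP => u _; apply/'forall_implyP => v _; apply/implyP => euv.
by rewrite !ffunE (inj_eq enum_rank_inj); apply: contraTneq euv => ->; rewrite eirr.
Qed.

Lemma chi_colorable S : colorableb e S (chi e S).
Proof.
apply: (big_ind (colorableb e S)) => //; first exact: colorable_card.
by move=> a b; rewrite /minn; case: ifP.
Qed.

Lemma chi_min S m : colorableb e S m -> chi e S <= m.
Proof.
move=> Sm; have [mT|Tm] := leqP m #|T|.
  exact: (bigmin_leq (fun k : 'I_#|T|.+1 => nat_of_ord k) _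
                     (i := Ordinal (mT : m < #|T|.+1))).
apply: leq_trans (ltnW Tm); apply: (big_ind (fun n => n <= #|T|)) => //.
- by move=> a b aT _; exact: leq_trans (geq_minl _ _) aT.
- by move=> i _; rewrite -ltnS.
Qed.

Lemma proper_colouring_chi S : exists g, proper_colouring S (chi e S) g.
Proof.
have /existsP[f /'forall_implyP fP] := chi_colorable S.
exists (fun v => nat_of_ord (f v)); split=> [v _|u v uS vS euv]; first exact: ltn_ord.
by have /'forall_implyP/(_ v vS)/implyP/(_ euv) := fP u uS.
Qed.

Lemma chi_le_colouring S m g : 0 < m -> proper_colouring S m g -> chi e S <= m.
Proof.
move=> m_gt0 [gb gp]; apply: chi_min; apply/existsP.
exists [ffun v => insubd (Ordinal m_gt0) (g v)].
apply/'forall_implyP => u uS; apply/'forall_implyP => v vS; apply/implyP => euv.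
by rewrite !ffunE -(inj_eq val_inj) !insubdK; [exact: gp | exact: gb | exact: gb].
Qed.

Lemma chi_gt0 S (x : T) : 0 < chi e S.
Proof. by have /existsP[f _] := chi_colorable S; case: (chi e S) f => // f; case: (f x). Qed.

Lemma clique_card_le (S K : {set T}) m g :
  K \subset S -> {in K &, forall a b, a != b -> e a b} ->
  proper_colouring S m g -> #|K| <= m.
Proof.
move=> /subsetP KS Kc [gb gp].
rewrite cardE -(size_map g) -(size_iota 0 m); apply: uniq_leq_size.
  rewrite map_inj_in_uniq ?enum_uniq // => a b; rewrite !mem_enum => aK bK.
  by apply: contra_eq => ab; apply: gp; rewrite ?KS // Kc.
by move=> _ /mapP[a aK ->]; rewrite mem_iota add0n gb // KS // -mem_enum.
Qed.

Lemma chi_setD1 (S : {set T}) v : chi e S <= (chi e (S :\ v)).+1.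
Proof.
have [g [gb gp]] := proper_colouring_chi (S :\ v).
pose h u := if u == v then chi e (S :\ v) else g u.
apply: (@chi_le_colouring _ _ h) => //; split=> [u uS|u w uS wS euw]; rewrite /h.
  by case: eqP => [//|/eqP uv]; apply: ltnW; rewrite ltnS gb // !inE uv.
case: (eqVneq u v) => [uv|uv]; case: (eqVneq w v) => [wv|wv].
- by move: euw; rewrite uv wv eirr.
- by rewrite neq_ltn gb ?orbT // !inE wv.
- by rewrite neq_ltn gb // !inE uv.
- by apply: gp; rewrite // !inE ?uv ?wv.
Qed.

Lemma chi_setD1_isolated (S : {set T}) v : {in S, forall u, ~~ e v u} ->
  chi e S <= chi e (S :\ v).
Proof.
move=> vS; have [g [gb gp]] := proper_colouring_chi (S :\ v).
pose h u := if u == v then 0 else g u.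
apply: (@chi_le_colouring _ _ h); first exact: chi_gt0 v.
split=> [u uS|u w uS wS euw]; rewrite /h.
  by case: eqP => [_|/eqP uv]; [exact: chi_gt0 v | rewrite gb // !inE uv].
case: (eqVneq u v) => [uv|uv]; last case: (eqVneq w v) => [wv|wv].
- by move: (vS w wS); rewrite -uv euw.
- by move: (vS u uS); rewrite -wv esym euw.
- by apply: gp; rewrite // !inE ?uv ?wv.
Qed.

Lemma chiG_le_missing_colour x y m g c :
  e x y -> proper_colouring ([set: T] :\ x :\ y) m g -> c < m ->
  {in common_nbhd e x y, forall w, g w != c} -> chiG e <= m.+1.
Proof.
move=> exy [gb gp] cm Bc.
have yx : y != x by apply: contraTneq exy => ->; rewrite eirr.
have inS v : v != x -> v != y -> v \in [set: T] :\ x :\ y by rewrite !inE => -> ->.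
pose h v := if v == x then c else if v == y then m
            else if (g v == c) && e x v then m else g v.
have hx : h x = c by rewrite /h eqxx.
have hy : h y = m by rewrite /h eqxx (negbTE yx).
have hS v : v != x -> v != y -> h v = if (g v == c) && e x v then m else g v.
  by rewrite /h => /negbTE-> /negbTE->.
have h_nbr_x v : e x v -> h v != c.
  move=> exv; case: (eqVneq v x) => [vx|vx]; first by move: exv; rewrite vx eirr.
  case: (eqVneq v y) => [->|vy]; first by rewrite hy (gtn_eqF cm).
  by rewrite hS // exv andbT; case: ifP => [_|/negbT //]; rewrite (gtn_eqF cm).
have h_nbr_y v : e y v -> h v != m.
  move=> eyv; case: (eqVneq v x) => [->|vx]; first by rewrite hx (ltn_eqF cm).
  case: (eqVneq v y) => [vy|vy]; first by move: eyv; rewrite vy eirr.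
  rewrite hS //; case: ifP => [/andP[/eqP gvc exv]|_]; last by rewrite ltn_eqF ?gb ?inS.
  by move: (Bc v); rewrite /common_nbhd !inE exv eyv gvc eqxx => /(_ isT).
have h_S u v : u != x -> u != y -> v != x -> v != y -> e u v -> h u != h v.
  move=> ux uy vx vy euv; rewrite !hS //.
  have gu := gb u (inS u ux uy); have gv := gb v (inS v vx vy).
  have guv := gp u v (inS u ux uy) (inS v vx vy) euv.
  case: ifP => [/andP[/eqP guc _]|_]; case: ifP => [/andP[/eqP gvc _]|_] //.
  - by move: guv; rewrite guc gvc eqxx.
  - by rewrite gtn_eqF.
  - by rewrite ltn_eqF.
apply: (chi_le_colouring (g := h)) => //; split=> [v _|u v _ _ euv].
  rewrite /h; case: ifP => [_|/negbT vx]; first exact: ltnW.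
  case: ifP => [//|/negbT vy]; case: ifP => // _.
  by apply/ltnW/gb/inS.
case: (eqVneq u x) => [uxE|ux]; first by rewrite uxE hx eq_sym h_nbr_x // -uxE.
case: (eqVneq u y) => [uyE|uy]; first by rewrite uyE hy eq_sym h_nbr_y // -uyE.
case: (eqVneq v x) => [vxE|vx]; first by rewrite vxE hx h_nbr_x // esym -vxE.
case: (eqVneq v y) => [vyE|vy]; first by rewrite vyE hy h_nbr_y // esym -vyE.
exact: h_S.
Qed.
End Colouring.

Lemma independentP (T : finType) (e : rel T) (I : {set T}) :
  independent e I -> {in I &, forall u v, ~~ e u v}.
Proof. by move=> /'forall_implyP indI u v uI vI; move/'forall_implyP: (indI u uI); apply. Qed.

Lemma card_common_nbhd_lt (T : finType) (e : rel T) x y :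
  irreflexive e -> e x y -> #|common_nbhd e x y| < #|nbhd e x|.
Proof.
move=> eirr exy; apply/proper_card/properP; split; first exact: subsetIl.
by exists y; rewrite !inE ?exy // eirr andbF.
Qed.

Section DoubleCritical.
Variables (T : finType) (e : rel T).
Hypothesis esym : symmetric e.
Hypothesis eirr : irreflexive e.
Hypothesis dc : double_critical e.

Lemma colour_classes_meet_common_nbhd x y g :
  e x y -> proper_colouring e ([set: T] :\ x :\ y) (chi e ([set: T] :\ x :\ y)) g ->
  forall c, c < chi e ([set: T] :\ x :\ y) ->
  exists2 w, w \in common_nbhd e x y & g w = c.
Proof.
move=> exy gS c cS.
case: (pickP [pred w | (w \in common_nbhd e x y) && (g w == c)]).
  by move=> w /andP[Bw /eqP gw]; exists w.
move=> none.
have Bc : {in common_nbhd e x y, forall w, g w != c}.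
  by move=> w Bw; move: (none w); rewrite /= Bw => /negbT.
have := chiG_le_missing_colour esym eirr exy gS cS Bc.
have := dc.2 x y exy; have := chi_gt0 eirr [set: T] x; rewrite -/(chiG e); lia.
Qed.

Lemma chiG_le_card_common_nbhd x y : e x y -> chiG e - 2 <= #|common_nbhd e x y|.
Proof.
move=> exy; set S := [set: T] :\ x :\ y.
have [g gS] := proper_colouring_chi eirr S.
have chiS2 : chiG e <= (chi e S).+2.
  by apply: leq_trans (chi_setD1 eirr _ x) _; rewrite ltnS chi_setD1.
suff : chi e S <= #|common_nbhd e x y| by lia.
rewrite cardE -(size_map g) -(size_iota 0 (chi e S)).
apply: uniq_leq_size (iota_uniq _ _) _ => c; rewrite mem_iota add0n => cS.
have [w Bw <-] := colour_classes_meet_common_nbhd exy gS cS.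
by apply: map_f; rewrite mem_enum.
Qed.

Lemma exists_common_nbr_nonadjacent x y z :
  e x y -> e x z -> z != y -> ~~ e y z ->
  exists2 w, w \in common_nbhd e x z & ~~ e y w.
Proof.
move=> exy exz zy nyz; set S := [set: T] :\ x :\ z.
have neq u v : e u v -> u != v by apply: contraTneq => ->; rewrite eirr.
have yS : y \in S by rewrite /S !inE (eq_sym y z) zy eq_sym neq.
have [g [gb gp]] := proper_colouring_chi eirr S.
have [w Bw gw] := colour_classes_meet_common_nbhd exz (conj gb gp) (gb y yS).
exists w => //; move: Bw; rewrite !inE => /andP[exw ezw].
have wS : w \in S by rewrite /S !inE (eq_sym w z) (eq_sym w x) !neq.
by apply/negP => /(gp y w yS wS); rewrite gw eqxx.
Qed.

Lemma exists_nbr x : exists y, e x y.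
Proof.
case: (pickP (e x)) => [y exy|isolated]; first by exists y.
have := chi_setD1_isolated esym eirr (S := [set: T]) (v := x).
by rewrite leqNgt dc.1 => /(_ (fun u _ => negbT (isolated u))).
Qed.

Lemma nbhd_not_clique x : ~ complete e ->
  exists a b, [/\ e x a, e x b, a != b & ~~ e a b].
Proof.
move=> nc.
case: (boolP [exists a, exists b, [&& e x a, e x b, a != b & ~~ e a b]]).
  by move=> /existsP[a /existsP[b /and4P[]]]; exists a, b.
move=> /negP noPair; exfalso.
have nbhd_clique a b : e x a -> e x b -> a != b -> e a b.
  move=> xa xb ab; apply/negPn/negP => nab; apply: noPair.
  by apply/existsP; exists a; apply/existsP; exists b; rewrite xa xb ab nab.
set K := x |: nbhd e x.
have Kc : {in K &, forall a b, a != b -> e a b}.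
  move=> a b; rewrite !inE => /predU1P[->|xa] /predU1P[->|xb] ab //.
  - by rewrite eqxx in ab.
  - by rewrite esym.
  - exact: nbhd_clique.
have [v vK] : exists v, v \notin K.
  case: (pickP [pred v | v \notin K]) => [v vK|allK]; first by exists v.
  by case: nc => a b; apply: Kc; apply/negbFE; [exact: allK a | exact: allK b].
have [y exy] := exists_nbr x.
have [g gS] := proper_colouring_chi eirr ([set: T] :\ v).
have KS : K \subset [set: T] :\ v.
  by apply/subsetP => u uK; rewrite !inE andbT; apply: contraNneq vK => <-.
have cardK : #|K| = #|nbhd e x|.+1 by rewrite cardsU1 !inE eirr.
have := clique_card_le KS Kc gS; have := dc.1 v.
have := chiG_le_card_common_nbhd exy; have := card_common_nbhd_lt eirr exy.
lia.
Qed.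

Lemma alpha_at_ge2 x : ~ complete e -> 2 <= alpha_at e x.
Proof.
move=> /(nbhd_not_clique x)[a [b [xa xb ab nab]]].
have <- : #|[set a; b]| = 2 by rewrite cards2 ab.
apply: leq_bigmax_cond; apply/andP; split.
  by apply/subsetP => u; rewrite !inE => /predU1P[->|/eqP->]; rewrite ?xa.
by apply/'forall_implyP => u; rewrite !inE => /predU1P[->|/eqP->];
  apply/'forall_implyP => w; rewrite !inE => /predU1P[->|/eqP->];
  rewrite ?eirr // esym.
Qed.

Lemma card_indep_common_nbhd_lt x y z (I : {set T}) :
  I \subset nbhd e x -> independent e I -> y \in I -> z \in I -> z != y ->
  #|I| + #|common_nbhd e x y| < #|nbhd e x|.
Proof.
move=> /subsetP IN /independentP indI yI zI zy.
have nbrI u : u \in I -> e x u by move=> /IN; rewrite inE.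
have [w Bw nyw] :=
  exists_common_nbr_nonadjacent (nbrI y yI) (nbrI z zI) zy (indI y z yI zI).
move: Bw; rewrite !inE => /andP[exw ezw].
have IB0 : I :&: common_nbhd e x y = set0.
  apply/setP => u; rewrite !inE; apply/and3P => -[uI _ eyu].
  by move: (indI y u yI uI); rewrite eyu.
have wIB : w \notin I :|: common_nbhd e x y.
  rewrite !inE (negbTE nyw) andbF orbF.
  by apply/negP => /(indI z w zI); rewrite ezw.
have := cardsUI I (common_nbhd e x y); rewrite IB0 cards0 addn0 => <-.
have := cardsU1 w (I :|: common_nbhd e x y); rewrite wIB add1n => <-.
apply: subset_leq_card.
apply/subsetP => u; rewrite !inE => /or3P[/eqP->|/nbrI|/andP[]] //.
Qed.

End DoubleCritical.

Theorem proposition12 (T : finType) (e : rel T) (k : nat) (x : T) :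
  simple_graph e -> ~ complete e -> double_critical e -> chiG e = k ->
  2 <= alpha_at e x /\
  forall (y : T) (I : {set T}),
    I \subset nbhd e x -> independent e I -> #|I| = alpha_at e x -> y \in I ->
    #|common_nbhd e x y| + 1 <= #|nbhd e x| - alpha_at e x /\
    k - 1 <= #|common_nbhd e x y| + 1.
Proof.
move=> [esym eirr] nc dc <-.
have alpha2 := alpha_at_ge2 esym eirr dc x nc.
split=> // y I IN indI cardI yI.
have [z zI zy] : exists2 z, z \in I & z != y.
  have : 0 < #|I :\ y| by move: alpha2; rewrite -cardI (cardsD1 y) yI.
  by move=> /card_gt0P[z]; rewrite !inE => /andP[zy zI]; exists z.
have exy : e x y by move/subsetP: IN => /(_ y yI); rewrite inE.
have := card_indep_common_nbhd_lt esym eirr dc IN indI yI zI zy.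
have := chiG_le_card_common_nbhd esym eirr dc exy.
rewrite -cardI; split; lia.
Qed.
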